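(* Let $m\ge2$ and let $\mathcal W\subseteq\mathcal S_m$ be such that the graph $\mathcal G(\mathcal W)$ is a tree. Let $\mathcal B=\mathcal S_m\setminus\mathcal W$. Then from every $B\in\mathcal B$ there is a path in $\mathcal G(\mathcal B)$ from $B$ to a border quadrilateral (which lies in $\mathcal B$).
   Context: Let $Q$ be a convex quadrilateral in $\mathbb{R}^2$. Divide $Q$ into two triangles by its shorter diagonal (either diagonal if they have equal length). Label the vertices $Q_1,Q_2,Q_3,Q_4$ anticlockwise, starting at an endpoint of that diagonal, so that the diagonal is $Q_1Q_3$. For an integer $m\ge2$, define the following index sets: - $A_1=\{(k_1,k_2,k_3,0)\in\mathbb{Z}_{\ge0}^4:k_1+k_2+k_3=m-1,\ k_2\ne0\}$, - $A_2=\{(k_1,0,k_3,k_4)\in\mathbb{Z}_{\ge0}^4:k_1+k_3+k_4=m-1,\ k_4\ne0\}$, - $A_3=\{(k_1,0,k_3,0)\in\mathbb{Z}_{\ge0}^4:k_1+k_3=m-1\}$, - $A=A_1\cup A_2\cup A_3$. For $k\in A$, let $S_m(k)$ be the quadrilateral with ordered vertices $R_1R_2R_3R_4$ given below. - If $k\in A_1$: $R_1=\frac{(k_1+1)Q_1+k_2Q_2+k_3Q_3}{m}$, $R_2=\frac{k_1Q_1+(k_2+1)Q_2+k_3Q_3}{m}$, $R_3=\frac{k_1Q_1+k_2Q_2+(k_3+1)Q_3}{m}$, $R_4=\frac{(k_1+1)Q_1+(k_2-1)Q_2+(k_3+1)Q_3}{m}$. - If $k\in A_2$: $R_1=\frac{(k_1+1)Q_1+k_3Q_3+k_4Q_4}{m}$,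 $R_2=\frac{(k_1+1)Q_1+(k_3+1)Q_3+(k_4-1)Q_4}{m}$, $R_3=\frac{k_1Q_1+(k_3+1)Q_3+k_4Q_4}{m}$, $R_4=\frac{k_1Q_1+k_3Q_3+(k_4+1)Q_4}{m}$. - If $k\in A_3$: $R_1=\frac{(k_1+1)Q_1+k_3Q_3}{m}$, $R_2=\frac{k_1Q_1+Q_2+k_3Q_3}{m}$, $R_3=\frac{k_1Q_1+(k_3+1)Q_3}{m}$, $R_4=\frac{k_1Q_1+k_3Q_3+Q_4}{m}$. Let $\mathcal S_m=\{S_m(k):k\in A\}$; these quadrilaterals tile $Q$. A border quadrilateral is an element of $\mathcal S_m$ having a side contained in the boundary of $Q$. For $\mathcal W\subseteq\mathcal S_m$, the graph $\mathcal G(\mathcal W)$ has vertex set $\mathcal W$, with two elements adjacent iff they have a common side. For $\mathcal B\subseteq\mathcal S_m$, the graph $\mathcal G(\mathcal B)$ has vertex set $\mathcal B$, with two elements adjacent iff they have a common side or a common vertex. *)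

From HB Require Import structures.
From mathcomp Require Import all_boot all_order all_algebra.
Set Implicit Arguments. Unset Strict Implicit. Unset Printing Implicit Defensive.
Import Order.TTheory GRing.Theory Num.Theory.
Local Open Scope ring_scope.

Section Quad.
Variable R : realFieldType.

Definition pt := (R * R)%type.
Definition padd (p q : pt) : pt := (p.1 + q.1, p.2 + q.2).
Definition pscale (a : R) (p : pt) : pt := (a * p.1, a * p.2).
Definition orient (p q r : pt) : R :=
  (q.1 - p.1) * (r.2 - p.2) - (q.2 - p.2) * (r.1 - p.1).
Definition sqdist (p q : pt) : R := (p.1 - q.1) ^+ 2 + (p.2 - q.2) ^+ 2.

Definition convex_ccw_quad (Q1 Q2 Q3 Q4 : pt) : Prop :=
  [/\ 0 < orient Q1 Q2 Q3, 0 < orient Q2 Q3 Q4, 0 < orient Q3 Q4 Q1 & 0 < orient Q4 Q1 Q2].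

Definition seg_pt (a b : pt) (t : R) : pt := padd (pscale (1 - t) a) (pscale t b).
Definition on_seg (p a b : pt) : Prop := exists t, 0 <= t <= 1 /\ p = seg_pt a b t.
Definition on_boundary (Q1 Q2 Q3 Q4 p : pt) : Prop :=
  [\/ on_seg p Q1 Q2, on_seg p Q2 Q3, on_seg p Q3 Q4 | on_seg p Q4 Q1].

Variables (Q1 Q2 Q3 Q4 : pt) (m : nat).

Definition idx := ('I_m * 'I_m * 'I_m * 'I_m)%type.
Definition k1 (k : idx) : nat := k.1.1.1.
Definition k2 (k : idx) : nat := k.1.1.2.
Definition k3 (k : idx) : nat := k.1.2.
Definition k4 (k : idx) : nat := k.2.

Definition inA1 (k : idx) : bool := [&& (k1 k + k2 k + k3 k == m.-1)%N, k2 k != 0%N & k4 k == 0%N].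
Definition inA2 (k : idx) : bool := [&& (k1 k + k3 k + k4 k == m.-1)%N, k2 k == 0%N & k4 k != 0%N].
Definition inA3 (k : idx) : bool := [&& (k1 k + k3 k == m.-1)%N, k2 k == 0%N & k4 k == 0%N].
Definition inA (k : idx) : bool := [|| inA1 k, inA2 k | inA3 k].

Definition comb (a b c d : nat) : pt :=
  pscale (m%:R)^-1 (padd (padd (pscale a%:R Q1) (pscale b%:R Q2))
                         (padd (pscale c%:R Q3) (pscale d%:R Q4))).

(* the i-th vertex R_{i+1} (i taken mod 4) of the quadrilateral S_m(k) *)
Definition vert (k : idx) (i : nat) : pt :=
  let a := k1 k in let b := k2 k in let c := k3 k in let d := k4 k in
  if inA1 k then
    match (i %% 4)%N with
    | 0 => comb a.+1 b c 0
    | 1 => comb a b.+1 c 0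
    | 2 => comb a b c.+1 0
    | _ => comb a.+1 b.-1 c.+1 0
    end
  else if inA2 k then
    match (i %% 4)%N with
    | 0 => comb a.+1 0 c d
    | 1 => comb a.+1 0 c.+1 d.-1
    | 2 => comb a 0 c.+1 d
    | _ => comb a 0 c d.+1
    end
  else (* A3 *)
    match (i %% 4)%N with
    | 0 => comb a.+1 0 c 0
    | 1 => comb a 1 c 0
    | 2 => comb a 0 c.+1 0
    | _ => comb a 0 c 1
    end.

Definition Sm : {set idx} := [set k | inA k].

Definition common_side (k l : idx) : bool :=
  [exists i : 'I_4, exists j : 'I_4,
     let a := vert k i in let b := vert k i.+1 in
     let c := vert l j in let d := vert l j.+1 in
     ((a == c) && (b == d)) || ((a == d) && (b == c))].

Definition common_vertex (k l : idx) : bool :=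
  [exists i : 'I_4, exists j : 'I_4, vert k i == vert l j].

Definition adjW (W : {set idx}) : rel idx :=
  fun k l => [&& k \in W, l \in W, k != l & common_side k l].

Definition adjB (B : {set idx}) : rel idx :=
  fun k l => [&& k \in B, l \in B, k != l & common_side k l || common_vertex k l].

Definition border (k : idx) : Prop :=
  exists i : 'I_4, forall t : R, 0 <= t <= 1 ->
    on_boundary Q1 Q2 Q3 Q4 (seg_pt (vert k i) (vert k i.+1) t).

End Quad.

Definition is_tree (T : finType) (V : {set T}) (e : rel T) : Prop :=
  [/\ V != set0,
      (forall x y, x \in V -> y \in V -> connect e x y)
    & (forall s : seq T, (3 <= size s)%N -> uniq s -> {subset s <= V} -> ~~ cycle e s)].

From HB Require Import structures.
From mathcomp Require Import all_boot all_order all_algebra.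
From mathcomp Require Import zify ring lra.
Import Order.TTheory GRing.Theory Num.Theory.
Set Implicit Arguments. Unset Strict Implicit. Unset Printing Implicit Defensive.

(* The statement is combinatorial.  Giving S_m(k) the grid coordinates
   x = k2 + k3, y = k3 + k4, the tiles form an m x m grid whose vertices are
   the lattice points of Q: orthogonal grid neighbours ("rook" moves) share a
   side and diagonal ones ("king" moves) share a vertex.  We put this grid
   inside an (m+2) x (m+2) grid whose outer frame is free, and show: if W is
   a set of inner cells without rook cycles, every cell outside W reaches the
   frame by king moves avoiding W.  The proof is by induction on #|W|: a
   leaf l of the rook forest W has at most one rook neighbour in W, so the
   free cells among the eight neighbours of l are king-connected to each
   other, and a free path of W :\ l through l can be rerouted around it.
   The last inner cell of such a path is a border tile. *)

Section ForestLeaf.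
Variables (T : finType) (e : rel T) (W : {set T}).
Hypotheses (e_sym : symmetric e) (e_irr : irreflexive e) (e_in : forall x y, e x y -> x \in W).
Hypothesis e_acyclic :
  forall s, 2 < size s -> uniq s -> {subset s <= W} -> ~~ cycle e s.

(* At a vertex with two distinct neighbours, a simple path starting there
   extends backwards: otherwise both neighbours lie on it and close a cycle. *)
Lemma extend_simple_path v p : 1 < #|[set u | e v u]| -> uniq (v :: p) -> path e v p ->
  exists2 u, e u v & u \notin v :: p.
Proof.
case/card_gt1P => u1 [u2 []]; rewrite !inE => vu1 vu2 u12 simple vp.
have inp w : e v w -> w \in v :: p -> w \in p.
  by move=> vw; rewrite inE => /predU1P [wv | //]; move: vw; rewrite wv e_irr.
case: (boolP (u1 \in v :: p)) => [/(inp _ vu1) u1p | ]; last by exists u1; rewrite // e_sym.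
case: (boolP (u2 \in v :: p)) => [/(inp _ vu2) u2p | ]; last by exists u2; rewrite // e_sym.
exfalso; have [u [vu up uh]] : exists u, [/\ e v u, u \in p & u != head v p].
  case: (eqVneq u1 (head v p)) => [u1h | ]; last by exists u1.
  by exists u2; split => //; rewrite -u1h eq_sym.
case/splitPr: up simple vp uh => [[|y p1] p2 simple vp]; first by rewrite eqxx.
move=> _; set c := v :: rcons (y :: p1) u.
have cyc : cycle e c.
  have vpu : path e v (rcons (y :: p1) u).
    by move: vp; rewrite -cat_rcons cat_path => /andP [].
  rewrite (_ : cycle e c = path e v (rcons (rcons (y :: p1) u) v)) //.
  by rewrite rcons_path vpu last_rcons e_sym.
have c_uniq : uniq c.
  by move: simple; rewrite -cat_rcons -cat_cons cat_uniq => /andP [].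
have c_in : {subset c <= W}.
  by move=> w wc; apply: (e_in (y := next c w)); apply: (next_cycle cyc).
have c_size : 2 < size c by rewrite /c /= size_rcons.
by move: (e_acyclic c_size c_uniq c_in); rewrite cyc.
Qed.

(* A nonempty forest has a vertex of degree at most one, since otherwise
   simple paths could be extended beyond #|T| vertices. *)
Lemma forest_leaf : W != set0 -> exists2 l, l \in W & #|[set u | e l u]| <= 1.
Proof.
case/set0Pn => v0 v0W.
case: (boolP [exists l in W, #|[set u | e l u]| <= 1]) => [/exists_inP [l lW] | ].
  by exists l.
move=> /exists_inPn branching; exfalso.
have long n : exists v p, [/\ size p = n, v \in W, uniq (v :: p) & path e v p].
  elim: n => [|n [v [p [sz vW simple vp]]]]; first by exists v0, [::].
  have v_branch : 1 < #|[set u | e v u]| by rewrite ltnNge branching.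
  have [u uv u_new] := extend_simple_path v_branch simple vp.
  exists u, (v :: p); split; first by rewrite /= sz.
  - exact: e_in uv.
  - by rewrite cons_uniq u_new simple.
  - by rewrite /= uv.
have [v [p [sz _ simple _]]] := long #|T|.
by have := max_card (mem (v :: p)); rewrite (card_uniqP simple) /= sz ltnn.
Qed.
End ForestLeaf.

Lemma connect_bypass (T : finType) (e e' : rel T) (l x y : T) :
  ~~ e l l ->
  (forall u v, u != l -> v != l -> e u v -> connect e' u v) ->
  (forall u v, u != l -> v != l -> e u l -> e l v -> connect e' u v) ->
  x != l -> y != l -> connect e x y -> connect e' x y.
Proof.
move=> ell direct detour xl yl /connectP [s xs y_last]; subst y.
move: yl xs; have [n] := ubnP (size s); elim: n x s xl => // n IH x [|z s] //= xl size_s.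
move=> sl /andP [xz zs].
case: (eqVneq z l) => [zl | zl]; last first.
  exact: connect_trans (direct _ _ xl zl xz) (IH z s zl size_s sl zs).
subst z; case: s size_s sl zs => [|z s] size_s /=; first by rewrite eqxx.
move=> sl /andP [lz zs]; have zl : z != l by move: lz; apply: contraTneq => ->.
exact: connect_trans (detour _ _ xl zl xz lz) (IH z s zl (ltnW size_s) sl zs).
Qed.

Lemma connect_map (T T' : finType) (e : rel T) (e' : rel T') (f : T -> T') :
  {homo f : x y / e x y >-> e' x y} -> {homo f : x y / connect e x y >-> connect e' x y}.
Proof.
move=> f_hom x _ /connectP [s xs ->]; apply/connectP.
by exists (map f s); [exact: homo_path xs | rewrite last_map].
Qed.

Section KingGrid.
Local Open Scope nat_scope.
Variable N : nat.

Definition cell := ('I_N.+1 * 'I_N.+1)%type.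
Implicit Types (p q l o u v w : cell) (W : {set cell}).

Definition near (a b : nat) : bool := (a <= b.+1) && (b <= a.+1).
Definition king p q : bool := [&& p != q, near p.1 q.1 & near p.2 q.2].
Definition rook p q : bool := king p q && ((p.1 == q.1 :> nat) || (p.2 == q.2 :> nat)).
Definition inner p : bool := [&& 0 < p.1, p.1 < N, 0 < p.2 & p.2 < N].
Definition free_step W p q : bool := [&& p \notin W, q \notin W & king p q].

Lemma cell_eqE p q : (p == q) = (p.1 == q.1 :> nat) && (p.2 == q.2 :> nat).
Proof. by case: p q => [a b] [c d]. Qed.

Lemma king_sym : symmetric king.
Proof. by move=> p q; rewrite /king /near !cell_eqE; lia. Qed.

Lemma king_irr : irreflexive king.
Proof. by move=> p; rewrite /king eqxx. Qed.

Lemma free_step_sym W : symmetric (free_step W).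
Proof. by move=> p q; rewrite /free_step king_sym andbCA. Qed.

Lemma free_step1 W p q : p \notin W -> q \notin W -> king p q -> connect (free_step W) p q.
Proof. by move=> pW qW pq; apply: connect1; rewrite /free_step pW qW. Qed.

Section AroundLeaf.
Variables (W : {set cell}) (l : cell).
Hypotheses (l_inner : inner l)
  (l_leaf : forall u v, rook l u -> rook l v -> u \in W -> v \in W -> u = v).

(* A free king neighbour of l is free-connected to a free rook neighbour:
   a diagonal cell sees the two rook neighbours next to it, and one is free. *)
Lemma rook_of_king p : p \notin W -> king p l ->
  exists o, [/\ rook l o, o \notin W & connect (free_step W) p o].
Proof.
move=> pW pl; have := pl; rewrite /king cell_eqE /near => /and3P [pl_ne near1 near2].
case: (boolP ((p.1 == l.1 :> nat) || (p.2 == l.2 :> nat))) => side.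
  by exists p; split => //; rewrite /rook king_sym pl; lia.
pose u : cell := (p.1, l.2); pose v : cell := (l.1, p.2).
have lu : rook l u by rewrite /rook /king /near cell_eqE /=; lia.
have lv : rook l v by rewrite /rook /king /near cell_eqE /=; lia.
have pu : king p u by rewrite /king /near cell_eqE /=; lia.
have pv : king p v by rewrite /king /near cell_eqE /=; lia.
have uv : u != v by rewrite cell_eqE /=; lia.
case: (boolP (u \in W)) => uW; last by exists u; rewrite lu uW free_step1.
case: (boolP (v \in W)) => vW; last by exists v; rewrite lv vW free_step1.
by move: uv; rewrite (l_leaf lu lv uW vW) eqxx.
Qed.

(* Free rook neighbours of l are free-connected: non-adjacent ones are
   opposite, and one of the two rook neighbours between them is free. *)
Lemma rook_nbrs_connected o1 o2 : rook l o1 -> rook l o2 -> o1 \notin W -> o2 \notin W ->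
  connect (free_step W) o1 o2.
Proof.
move=> lo1 lo2 o1W o2W.
case: (eqVneq o1 o2) => [-> | ne]; first exact: connect0.
case: (boolP (king o1 o2)) => [k12 | nk12]; first exact: free_step1.
have via w : w \notin W -> king o1 w -> king w o2 -> connect (free_step W) o1 o2.
  by move=> wW h1 h2; apply: connect_trans (free_step1 o1W wW h1) (free_step1 wW o2W h2).
move: lo1 lo2 ne nk12 l_inner; rewrite /rook /king /near /inner !cell_eqE => lo1 lo2 ne nk12 li.
have [u [v [uv lu lv [u1 u2 v1 v2]]]] : exists u v, [/\ u != v, rook l u, rook l v &
    [/\ king o1 u, king u o2, king o1 v & king v o2]].
  case: (boolP (o1.1 == l.1 :> nat)) => vertical.
    exists (inord l.1.-1, l.2), (inord l.1.+1, l.2).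
    rewrite /rook /king /near !cell_eqE /= !inordK; try lia; repeat split; lia.
  exists (l.1, inord l.2.-1), (l.1, inord l.2.+1).
  rewrite /rook /king /near !cell_eqE /= !inordK; try lia; repeat split; lia.
case: (boolP (u \in W)) => uW; last exact: via uW u1 u2.
case: (boolP (v \in W)) => vW; last exact: via vW v1 v2.
by move: uv; rewrite (l_leaf lu lv uW vW) eqxx.
Qed.

Lemma king_nbrs_connected p q : p \notin W -> q \notin W -> king p l -> king l q ->
  connect (free_step W) p q.
Proof.
move=> pW qW pl lq; rewrite king_sym in lq.
have [o1 [lo1 o1W po1]] := rook_of_king pW pl.
have [o2 [lo2 o2W qo2]] := rook_of_king qW lq.
rewrite (sym_connect_sym (free_step_sym W)) in qo2.
exact: connect_trans (connect_trans po1 (rook_nbrs_connected lo1 lo2 o1W o2W)) qo2.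
Qed.
End AroundLeaf.

Definition tree_edge W p q : bool := [&& p \in W, q \in W & rook p q].
Definition grid_forest W : Prop :=
  forall s, 2 < size s -> uniq s -> {subset s <= W} -> ~~ cycle (tree_edge W) s.
Definition escapes W p : Prop := exists2 c, ~~ inner c & connect (free_step W) p c.

Lemma grid_forest_sub W W' : W' \subset W -> grid_forest W -> grid_forest W'.
Proof.
move=> /subsetP sub forest s s_size s_uniq sW'; apply: contraTN isT => cyc.
have /negP [] := forest s s_size s_uniq (fun x xs => sub x (sW' x xs)).
by apply: sub_cycle cyc => x y /and3P [xW yW xy]; rewrite /tree_edge !sub.
Qed.

(* With no obstacle, walk along the row to the left edge of the frame. *)
Lemma escape_empty p : escapes set0 p.
Proof.
exists (ord0, p.2) => //.
suff to_column0 i : i <= N -> connect (free_step set0) (inord i, p.2) (ord0, p.2).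
  by have := to_column0 p.1 (leq_ord _); rewrite inord_val -surjective_pairing.
elim: i => [|i IH] iN.
  by rewrite (_ : inord 0 = ord0) //; apply: val_inj; rewrite /= inordK.
apply: connect_trans (IH (ltnW iN)); apply: free_step1; rewrite ?in_set0 //.
by rewrite /king /near cell_eqE /= !inordK //; lia.
Qed.

(* Main grid statement, by removing a leaf of W and rerouting around it. *)
Lemma escape_forest W : {subset W <= inner} -> grid_forest W ->
  forall b, b \notin W -> escapes W b.
Proof.
have [n] := ubnP #|W|; elim: n W => // n IH W size_W W_inner W_forest b bW.
case: (eqVneq W set0) => [-> | W0]; first exact: escape_empty.
have edge_sym : symmetric (tree_edge W).
  by move=> p q; rewrite /tree_edge /rook king_sym andbCA !(eq_sym (_ q.1)) !(eq_sym (_ q.2)).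
have edge_irr : irreflexive (tree_edge W) by move=> p; rewrite /tree_edge /rook king_irr !andbF.
have edge_in p q : tree_edge W p q -> p \in W by case/andP.
have [l lW l_deg] := forest_leaf edge_sym edge_irr edge_in W_forest W0.
have l_leaf u v : rook l u -> rook l v -> u \in W -> v \in W -> u = v.
  by move=> lu lv uW vW; apply: (card_le1_eqP l_deg); rewrite inE /tree_edge lW ?uW ?vW.
have [c c_out bc] : escapes (W :\ l) b.
  apply: IH.
  - by rewrite (cardsD1 l W) lW in size_W.
  - by move=> x /setD1P [_ /W_inner].
  - by apply: grid_forest_sub W_forest; apply: subsetDl.
  - by rewrite in_setD1 negb_and bW orbT.
have bl : b != l by apply: contraNneq bW => ->.
have cl : c != l by apply: contraNneq c_out => ->; apply: W_inner.
exists c => //; apply: (connect_bypass _ _ _ bl cl bc).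
- by rewrite /free_step king_irr !andbF.
- move=> u v ul vl; rewrite /free_step !in_setD1 ul vl /= => /and3P [uW vW uv].
  exact: free_step1.
- move=> u v ul vl /and3P [uW _ ul'] /and3P [_ vW lv].
  rewrite in_setD1 ul /= in uW; rewrite in_setD1 vl /= in vW.
  exact: king_nbrs_connected (W_inner _ lW) l_leaf _ _ uW vW ul' lv.
Qed.

Definition frame_border p : bool :=
  [|| p.1 == 1 :> nat, p.1 == N.-1 :> nat, p.2 == 1 :> nat | p.2 == N.-1 :> nat].
Definition inner_free_step W p q : bool := [&& inner p, inner q & free_step W p q].

(* An escaping inner cell reaches, through inner free cells, an inner cell
   next to the frame: the last inner cell of the escape path. *)
Lemma escape_through_border W b : inner b -> escapes W b ->
  exists2 c, [/\ inner c, c \notin W & frame_border c] & connect (inner_free_step W) b c.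
Proof.
move=> b_in [c + /connectP [s bs c_last]]; rewrite c_last {c c_last}.
elim: s b b_in bs => [|y s IH] b b_in /=; first by rewrite b_in.
case/andP => /and3P [bW yW b_y] ys s_out.
case: (boolP (inner y)) => y_in.
  have [c c_border yc] := IH y y_in ys s_out.
  exists c => //; apply: connect_trans yc; apply: connect1.
  by rewrite /inner_free_step b_in y_in /free_step bW yW.
exists b => //; split => //.
move: b_in y_in b_y; rewrite /frame_border /inner /king /near cell_eqE.
by have := ltn_ord y.1; have := ltn_ord y.2; lia.
Qed.
End KingGrid.
Arguments inner {N} p.

Section Encoding.
Local Open Scope nat_scope.
Variable m' : nat.
Local Notation m := m'.+1.
Local Notation cell := (cell m'.+2).
Implicit Types (k : idx m) (p : cell).

Definition grid_x k : nat := k2 k + k3 k.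
Definition grid_y k : nat := k3 k + k4 k.
Definition to_cell k : cell := (inord (grid_x k).+1, inord (grid_y k).+1).
Definition of_cell p : idx m :=
  let x := p.1.-1 in let y := p.2.-1 in
  if y < x then (inord (m' - x), inord (x - y), inord y, inord 0)
  else if x < y then (inord (m' - y), inord 0, inord x, inord (y - x))
  else (inord (m' - x), inord 0, inord x, inord 0).

Lemma Sm_facts k : k \in Sm m ->
  [/\ k1 k + k2 k + k3 k + k4 k = m', k2 k = 0 \/ k4 k = 0,
      inA1 k = (k2 k != 0) & inA2 k = (k4 k != 0)].
Proof. by rewrite inE /inA /inA1 /inA2 /inA3 => ?; split; lia. Qed.

Lemma in_Sm k : k1 k + k2 k + k3 k + k4 k = m' -> k2 k = 0 \/ k4 k = 0 -> k \in Sm m.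
Proof. by rewrite inE /inA /inA1 /inA2 /inA3 => *; lia. Qed.

Lemma idx_eq k l : k1 k = k1 l -> k2 k = k2 l -> k3 k = k3 l -> k4 k = k4 l -> k = l.
Proof.
case: k l => [[[a b] c] d] [[[a' b'] c'] d'].
by rewrite /k1 /k2 /k3 /k4 /= => /val_inj -> /val_inj -> /val_inj -> /val_inj ->.
Qed.

Lemma to_cellE k : k \in Sm m ->
  (to_cell k).1 = (grid_x k).+1 :> nat /\ (to_cell k).2 = (grid_y k).+1 :> nat.
Proof. by move=> /Sm_facts [sum _ _ _]; rewrite /to_cell /grid_x /grid_y /= !inordK //; lia. Qed.

Lemma to_cell_inner k : k \in Sm m -> inner (to_cell k).
Proof.
move=> kS; rewrite /inner; have [-> ->] := to_cellE kS.
by have [sum _ _ _] := Sm_facts kS; rewrite /grid_x /grid_y; lia.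
Qed.

Lemma of_cellE p : inner p ->
  [/\ grid_x (of_cell p) = p.1.-1, grid_y (of_cell p) = p.2.-1,
      k1 (of_cell p) + k2 (of_cell p) + k3 (of_cell p) + k4 (of_cell p) = m' &
      k2 (of_cell p) = 0 \/ k4 (of_cell p) = 0].
Proof.
rewrite /inner /grid_x /grid_y => /and4P [? ? ? ?].
by rewrite /of_cell; case: ifP => ?; last case: ifP => ?;
  rewrite /k1 /k2 /k3 /k4 /= !inordK; try (split; lia); lia.
Qed.

Lemma of_cell_Sm p : inner p -> of_cell p \in Sm m.
Proof. by move=> /of_cellE [_ _ sum side]; apply: in_Sm. Qed.

Lemma of_cellK p : inner p -> to_cell (of_cell p) = p.
Proof.
move=> p_in; apply/eqP; rewrite cell_eqE.
have [-> ->] := to_cellE (of_cell_Sm p_in); have [-> -> _ _] := of_cellE p_in.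
by move: p_in; rewrite /inner; lia.
Qed.

Lemma to_cellK k : k \in Sm m -> of_cell (to_cell k) = k.
Proof.
move=> kS; have [x y sum side] := of_cellE (to_cell_inner kS).
have [sum' side' _ _] := Sm_facts kS.
move: x y sum side; have [-> ->] := to_cellE kS; rewrite /grid_x /grid_y /=.
by set l := of_cell _ => *; apply: idx_eq; lia.
Qed.
Lemma of_cell_inj : {in inner &, injective of_cell}.
Proof. by move=> p q p_in q_in pq; rewrite -(of_cellK p_in) -(of_cellK q_in) pq. Qed.
End Encoding.
Arguments to_cell {m'} k.
Arguments of_cell {m'} p.

Section Segments.
Local Open Scope ring_scope.
Variable R : realFieldType.
Implicit Types (A B : pt R).

Lemma seg_pt_comp A B s1 s2 t :
  seg_pt (seg_pt A B s1) (seg_pt A B s2) t = seg_pt A B ((1 - t) * s1 + t * s2).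
Proof. by rewrite /seg_pt /padd /pscale /=; congr pair; ring. Qed.

Lemma sub_segment A B s1 s2 t : 0 <= s1 <= 1 -> 0 <= s2 <= 1 -> 0 <= t <= 1 ->
  on_seg (seg_pt (seg_pt A B s1) (seg_pt A B s2) t) A B.
Proof.
move=> /andP [s1_ge0 s1_le1] /andP [s2_ge0 s2_le1] /andP [t_ge0 t_le1].
exists ((1 - t) * s1 + t * s2); split; last exact: seg_pt_comp.
by apply/andP; split; nra.
Qed.
End Segments.

Section Tiling.
Variable R : realFieldType.
Variables (Q1 Q2 Q3 Q4 : pt R) (m' : nat).
Local Notation m := m'.+1.
Local Notation comb := (comb Q1 Q2 Q3 Q4 m).
Local Notation vert := (vert Q1 Q2 Q3 Q4).
Local Notation border := (border Q1 Q2 Q3 Q4).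
Implicit Types (k l : idx m).

Definition lattice_pt (x y : nat) : pt R :=
  if (y <= x)%N then comb (m - x) (x - y) y 0 else comb (m - y) 0 x (y - x).
Definition corner_dx (i : nat) : nat := (i == 1)%N || (i == 2)%N.
Definition corner_dy (i : nat) : nat := (i == 2)%N || (i == 3)%N.

Lemma vertE k i : k \in Sm m ->
  vert k i = lattice_pt (grid_x k + corner_dx (i %% 4)) (grid_y k + corner_dy (i %% 4)).
Proof.
move=> /Sm_facts [sum side A1 A2]; rewrite /vert A1 A2 /grid_x /grid_y.
have := ltn_pmod i (isT : (0 < 4)%N); case: (i %% 4)%N => [|[|[|[|j]]]] // _;
  rewrite /lattice_pt /corner_dx /corner_dy /=;
  repeat case: ifP => ?; first [congr comb; lia | exfalso; lia].
Qed.

Lemma corner_of_offset (a b : nat) : (a <= 1)%N -> (b <= 1)%N ->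
  exists i : 'I_4, corner_dx (i %% 4) = a /\ corner_dy (i %% 4) = b.
Proof.
case: a => [|[|a]] // _; case: b => [|[|b]] // _.
- by exists (@Ordinal 4 0 isT).
- by exists (@Ordinal 4 3 isT).
- by exists (@Ordinal 4 1 isT).
- by exists (@Ordinal 4 2 isT).
Qed.

Lemma king_common_vertex k l : k \in Sm m -> l \in Sm m ->
  king (to_cell k) (to_cell l) -> common_vertex Q1 Q2 Q3 Q4 k l.
Proof.
move=> kS lS /and3P [_]; have [-> ->] := to_cellE kS; have [-> ->] := to_cellE lS.
rewrite /near => near_x near_y.
have [i [i_dx i_dy]] := @corner_of_offset (grid_x l - grid_x k) (grid_y l - grid_y k)
  ltac:(lia) ltac:(lia).
have [j [j_dx j_dy]] := @corner_of_offset (grid_x k - grid_x l) (grid_y k - grid_y l)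
  ltac:(lia) ltac:(lia).
apply/existsP; exists i; apply/existsP; exists j.
by rewrite !vertE // i_dx i_dy j_dx j_dy; apply/eqP; congr lattice_pt; lia.
Qed.

Lemma common_sideI k l (i j : 'I_4) :
  vert k i = vert l j.+1 -> vert k i.+1 = vert l j -> common_side Q1 Q2 Q3 Q4 k l.
Proof.
by move=> e1 e2; apply/existsP; exists i; apply/existsP; exists j; rewrite /= e1 e2 !eqxx orbT.
Qed.

Lemma rook_common_side k l : k \in Sm m -> l \in Sm m ->
  rook (to_cell k) (to_cell l) -> common_side Q1 Q2 Q3 Q4 k l.
Proof.
move=> kS lS; rewrite /rook /king /near cell_eqE.
have [-> ->] := to_cellE kS; have [-> ->] := to_cellE lS => adj.
have [[]|[[]|[[]|[]]]] : (grid_x l = (grid_x k).+1 /\ grid_y l = grid_y k) \/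
    (grid_x k = (grid_x l).+1 /\ grid_y l = grid_y k) \/
    (grid_y l = (grid_y k).+1 /\ grid_x l = grid_x k) \/
    (grid_y k = (grid_y l).+1 /\ grid_x l = grid_x k) by lia.
- move=> x y; apply: (@common_sideI _ _ (@Ordinal 4 1 isT) (@Ordinal 4 3 isT));
  rewrite !vertE //= ?modnn ?modn_small // /corner_dx /corner_dy /=; congr lattice_pt; lia.
- move=> x y; apply: (@common_sideI _ _ (@Ordinal 4 3 isT) (@Ordinal 4 1 isT));
  rewrite !vertE //= ?modnn ?modn_small // /corner_dx /corner_dy /=; congr lattice_pt; lia.
- move=> x y; apply: (@common_sideI _ _ (@Ordinal 4 2 isT) (@Ordinal 4 0 isT));
  rewrite !vertE //= ?modnn ?modn_small // /corner_dx /corner_dy /=; congr lattice_pt; lia.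
- move=> x y; apply: (@common_sideI _ _ (@Ordinal 4 0 isT) (@Ordinal 4 2 isT));
  rewrite !vertE //= ?modnn ?modn_small // /corner_dx /corner_dy /=; congr lattice_pt; lia.
Qed.

Local Open Scope ring_scope.

Lemma frac_unit (x : nat) : (x <= m)%N -> 0 <= (x%:R / m%:R : R) <= 1.
Proof.
move=> xm; apply/andP; split; first by rewrite divr_ge0 ?ler0n.
by rewrite ler_pdivrMr ?ltr0Sn // mul1r ler_nat.
Qed.

Lemma lattice_side12 (x y : nat) : y = 0%N -> (x <= m)%N ->
  lattice_pt x y = seg_pt Q1 Q2 (x%:R / m%:R).
Proof.
move=> -> xm; rewrite /lattice_pt leq0n subn0 /comb /seg_pt /padd /pscale /= natrB //.
by congr pair; field; rewrite nat1r pnatr_eq0.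
Qed.

Lemma lattice_side23 (x y : nat) : x = m -> (y <= m)%N ->
  lattice_pt x y = seg_pt Q2 Q3 (y%:R / m%:R).
Proof.
move=> -> ym; rewrite /lattice_pt ym subnn /comb /seg_pt /padd /pscale /= natrB //.
by congr pair; field; rewrite nat1r pnatr_eq0.
Qed.

Lemma lattice_side34 (x y : nat) : y = m -> (x <= m)%N ->
  lattice_pt x y = seg_pt Q3 Q4 ((m - x)%:R / m%:R).
Proof.
move=> -> xm; have -> : lattice_pt x m = comb 0 0 x (m - x).
  by rewrite /lattice_pt; case: ifP => ?; congr comb; lia.
rewrite /comb /seg_pt /padd /pscale /= natrB //.
by congr pair; field; rewrite nat1r pnatr_eq0.
Qed.

Lemma lattice_side41 (x y : nat) : x = 0%N -> (y <= m)%N ->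
  lattice_pt x y = seg_pt Q4 Q1 ((m - y)%:R / m%:R).
Proof.
move=> -> ym; have -> : lattice_pt 0 y = comb (m - y) 0 0 y.
  by rewrite /lattice_pt; case: ifP => ?; congr comb; lia.
rewrite /comb /seg_pt /padd /pscale /= natrB //.
by congr pair; field; rewrite nat1r pnatr_eq0.
Qed.

Lemma frame_border_border k : k \in Sm m -> frame_border (to_cell k) -> border k.
Proof.
move=> kS; rewrite /frame_border; have [-> ->] := to_cellE kS.
have [sum _ _ _] := Sm_facts kS; rewrite /grid_x /grid_y.
case/or4P => /eqP edge.
- exists (@Ordinal 4 3 isT) => t t01; apply: Or44.
  rewrite !vertE //= ?modnn ?modn_small // /corner_dx /corner_dy /grid_x /grid_y /=.
  rewrite !lattice_side41; try lia.
  by apply: (@sub_segment R); rewrite ?frac_unit ?leq_subr.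
- exists (@Ordinal 4 1 isT) => t t01; apply: Or42.
  rewrite !vertE //= ?modnn ?modn_small // /corner_dx /corner_dy /grid_x /grid_y /=.
  rewrite !lattice_side23; try lia.
  by apply: (@sub_segment R); rewrite ?frac_unit //; lia.
- exists (@Ordinal 4 0 isT) => t t01; apply: Or41.
  rewrite !vertE //= ?modnn ?modn_small // /corner_dx /corner_dy /grid_x /grid_y /=.
  rewrite !lattice_side12; try lia.
  by apply: (@sub_segment R); rewrite ?frac_unit //; lia.
- exists (@Ordinal 4 2 isT) => t t01; apply: Or43.
  rewrite !vertE //= ?modnn ?modn_small // /corner_dx /corner_dy /grid_x /grid_y /=.
  rewrite !lattice_side34; try lia.
  by apply: (@sub_segment R); rewrite ?frac_unit ?leq_subr.
Qed.
End Tiling.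

Section Transfer.
Variable R : realFieldType.
Variables (Q1 Q2 Q3 Q4 : pt R) (m' : nat) (W : {set idx m'.+1}).
Hypothesis W_Sm : W \subset Sm m'.+1.

Definition grid_image : {set cell m'.+2} := [set to_cell k | k in W].

Lemma grid_image_inner : {subset grid_image <= inner}.
Proof. by move=> _ /imsetP [k kW ->]; apply/to_cell_inner/(subsetP W_Sm). Qed.

Lemma mem_grid_image p : inner p -> (p \in grid_image) = (of_cell p \in W).
Proof.
move=> p_in; apply/imsetP/idP => [[k kW ->] | pW]; last by exists (of_cell p); rewrite ?of_cellK.
by rewrite to_cellK // (subsetP W_Sm).
Qed.

(* Rook neighbours share a side, so a tree of tiles maps to a rook forest. *)
Lemma grid_image_forest :
  (forall s, (3 <= size s)%N -> uniq s -> {subset s <= W} -> ~~ cycle (adjW Q1 Q2 Q3 Q4 W) s) ->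
  grid_forest grid_image.
Proof.
move=> W_acyclic s s_size s_uniq sW.
have s_in : {subset s <= inner} by move=> p /sW /grid_image_inner.
have image_acyclic : ~~ cycle (adjW Q1 Q2 Q3 Q4 W) (map of_cell s).
  apply: W_acyclic.
  - by rewrite size_map.
  - by rewrite map_inj_in_uniq // => p q /s_in p_in /s_in q_in; apply: of_cell_inj.
  - by move=> _ /mapP [p ps ->]; rewrite -mem_grid_image ?sW //; apply: s_in.
apply: contra image_acyclic; rewrite cycle_map; apply: sub_cycle => p q /and3P [pW qW pq].
have [p_in q_in] := (grid_image_inner pW, grid_image_inner qW).
rewrite /= /adjW -!mem_grid_image // pW qW /=; apply/andP; split.
  by apply: contraTneq pq => /(of_cell_inj p_in q_in) ->; rewrite /rook king_irr.
by apply: rook_common_side; rewrite ?of_cellK ?of_cell_Sm.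
Qed.

(* King neighbours share a vertex, so free inner paths map to paths of the
   vertex-adjacency graph of the tiles outside W. *)
Lemma grid_path_transfer p q : connect (inner_free_step grid_image) p q ->
  connect (adjB Q1 Q2 Q3 Q4 (Sm m'.+1 :\: W)) (of_cell p) (of_cell q).
Proof.
apply: connect_map => {}p {}q /and3P [p_in q_in /and3P [pW qW pq]].
rewrite /adjB !in_setD -!mem_grid_image // pW qW !of_cell_Sm //=; apply/andP; split.
  by apply: contraTneq pq => /(of_cell_inj p_in q_in) ->; rewrite king_irr.
by rewrite king_common_vertex ?of_cellK ?of_cell_Sm ?orbT.
Qed.
End Transfer.

Local Open Scope ring_scope.

Theorem proposition4p1 (R : realFieldType) (Q1 Q2 Q3 Q4 : pt R) (m : nat)
    (W : {set idx m}) :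
  (2 <= m)%N ->
  convex_ccw_quad Q1 Q2 Q3 Q4 ->
  sqdist Q1 Q3 <= sqdist Q2 Q4 ->
  W \subset Sm m ->
  is_tree W (adjW Q1 Q2 Q3 Q4 W) ->
  forall b, b \in Sm m :\: W ->
  exists2 c, c \in Sm m :\: W &
    border Q1 Q2 Q3 Q4 c /\ connect (adjB Q1 Q2 Q3 Q4 (Sm m :\: W)) b c.
Proof.
case: m W => [|m'] W // _ _ _ W_Sm [_ _ W_acyclic] b /setDP [bS bW].
have b_out : to_cell b \notin grid_image W by rewrite mem_grid_image ?to_cellK ?to_cell_inner.
have b_escapes := escape_forest (grid_image_inner W_Sm)
  (grid_image_forest W_Sm W_acyclic) b_out.
have [c [c_in cW c_border] bc] := escape_through_border (to_cell_inner bS) b_escapes.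
exists (of_cell c); first by rewrite in_setD -mem_grid_image // cW of_cell_Sm.
split; first by apply: frame_border_border; rewrite ?of_cellK ?of_cell_Sm.
by rewrite -(to_cellK bS); apply: grid_path_transfer.
Qed.
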